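(* Let $d\ge2$, $b\ge1$ be integers and $\gamma,\nu>0$. Consider the $(d+1)\times(d+1)$ matrix $A^Q$ indexed by $0,1,\dots,d$ with $A^Q_{j,j}=-\nu$ for all $j$, $A^Q_{k,k-1}=\gamma$ for $1\le k\le d-1$, $A^Q_{d,d-1}=b\gamma$, and all other entries $0$; let $B^Q=\mathbf{e}_0$, and let $W(t)$ solve $\dot W=A^QW+W(A^Q)^T+B^Q(B^Q)^T$, $W(0)=0$. Let $V_{j,k}(s)$ denote the Laplace transform of $W_{j,k}(t)$. Then (i) for $0\le j,k\le d-1$: $V_{j,k}(s)=\dfrac{1}{s(s+2\nu)}\left(\dfrac{\gamma}{s+2\nu}\right)^{j+k}\dbinom{j+k}{k}$, equivalently $W_{j,k}(t)=\dfrac{1}{2\nu}\left(\dfrac{\gamma}{2\nu}\right)^{j+k}\dbinom{j+k}{k}\left[1-e^{-2\nu t}\sum_{\ell=0}^{j+k}\dfrac{(2\nu t)^\ell}{\ell!}\right]$; (ii) for $0\le j\le d-1$: $V_{d,j}(s)=V_{j,d}(s)=\dfrac{b}{s(s+2\nu)}\left(\dfrac{\gamma}{s+2\nu}\right)^{d+j}\dbinom{d+j}{d}$; (iii) $V_{d,d}(s)=\dfrac{b^2}{s(s+2\nu)}\left(\dfrac{\gamma}{s+2\nu}\right)^{2d}\dbinom{2d}{d}$.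
   Context: $A^Q$ is the adjacency matrix of a weighted directed path $0\to1\to\cdots\to d$ with uniform self-loop weight $-\nu$, all edge weights $\gamma$ except the last edge $(d-1)\to d$ which has weight $b\gamma$ (this is the quotient of the directed balloon graph). $\mathbf{e}_0$ is the standard basis vector for index $0$. The Laplace transform is $V(s)=\int_0^\infty e^{-st}W(t)\,dt$. *)

From HB Require Import structures.
From mathcomp Require Import all_boot all_order all_algebra.
From mathcomp Require Import all_classical all_reals all_analysis.
Set Implicit Arguments. Unset Strict Implicit. Unset Printing Implicit Defensive.
Import Order.TTheory GRing.Theory Num.Theory.
Local Open Scope ring_scope.

Definition AQ (R : ringType) (d : nat) (b gamma nu : R) : 'M[R]_d.+1 :=
  \matrix_(i, j)
    (if i == j then - nu
     else if (i == j.+1 :> nat) then (if (i == d :> nat) then b * gamma else gamma)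
     else 0).

Definition BQ (R : ringType) (d : nat) : 'cV[R]_d.+1 :=
  \col_i (if (i == 0 :> nat) then 1 else 0).

From HB Require Import structures.
From mathcomp Require Import all_boot all_order all_algebra.
From mathcomp Require Import all_classical all_reals all_analysis.
From mathcomp Require Import zify ring lra.
Set Implicit Arguments.
Unset Strict Implicit.
Import Order.TTheory GRing.Theory Num.Theory.
Import numFieldNormedType.Exports.
Local Open Scope ring_scope.
Local Open Scope classical_set_scope.

(* Write G_n(t) = 1 - e^{-2 nu t} \sum_{l<n} (2 nu t)^l / l! for the Erlang
   distribution function of shape n and rate 2 nu (so G_0 = 1).  It satisfies
   G_{n+1}(0) = 0, 0 <= G_n <= 1 and G_{n+1}' = 2 nu (G_n - G_{n+1}).

   Entrywise, the Lyapunov equation W' = A W + W A^T + e_0 e_0^T reads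
   W_{jk}' = -2 nu W_{jk} + a_j W_{j-1,k} + a_k W_{j,k-1} + [j = k = 0],
   where a_i is the subdiagonal weight of A^Q.  By induction on n = j + k and
   uniqueness for y' = -2 nu y, this forces W_{jk} = c_{jk} G_{j+k+1}, where the
   coefficients c_{jk} satisfy Pascal's rule (lemma [coef_rec]).

   The Laplace transform of G_{n+1} is computed with an explicit primitive of
   e^{-st} G_{n+1}(t) decaying at infinity and the fundamental theorem of
   calculus on [0, +oo[; it equals (2 nu / (s + 2 nu))^{n+1} / s.  The main
   theorem is then a matter of instantiating these formulas. *)

Section DerivativeRules.
(* Differentiation rules for real functions of a real variable, stated on
   pointwise expressions so that they compose by plain application. *)
Variable R : realType.
Implicit Types (f g : R -> R) (a k x df dg : R).

Lemma der_add f g x df dg :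
  is_derive x 1 f df -> is_derive x 1 g dg ->
  is_derive x 1 (fun t => f t + g t) (df + dg).
Proof. by move=> hf hg; apply: is_deriveD. Qed.

Lemma der_mul f g x df dg :
  is_derive x 1 f df -> is_derive x 1 g dg ->
  is_derive x 1 (fun t => f t * g t) (f x * dg + g x * df).
Proof. by move=> hf hg; apply: is_deriveM. Qed.

Lemma der_scale f k x df :
  is_derive x 1 f df -> is_derive x 1 (fun t => k * f t) (k * df).
Proof. by move=> hf; apply: is_deriveZ. Qed.

Lemma der_pow (n : nat) x : is_derive x 1 (fun t : R => t ^+ n) (n%:R * x ^+ n.-1).
Proof.
have := is_deriveX n (is_derive_id x (1 : R)).
by rewrite exprfctE /GRing.scale /= mulr1.
Qed.

Lemma der_expR_lin a x :
  is_derive x 1 (fun t : R => expR (a * t)) (a * expR (a * x)).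
Proof.
have := is_derive1_comp (is_derive_expR (a * x)) (der_scale a (is_derive_id x (1 : R))).
by rewrite mulr1 mulrC.
Qed.

Lemma linear_ode_zero (c : R) (y : R -> R) :
  (forall t : R, is_derive t 1 y (- c * y t)) -> y 0 = 0 -> forall t, y t = 0.
Proof.
move=> hy y0 t.
have const (x : R) : is_derive x 1 (fun u => expR (c * u) * y u) 0.
  apply: is_derive_eq (der_mul (der_expR_lin _ _) (hy x)) _; ring.
have := is_derive_0_is_cst t 0 const.
rewrite mulr0 expR0 y0 mulr0 => /eqP; rewrite mulf_eq0 expR_eq0 /=.
by move/eqP.
Qed.

End DerivativeRules.

Section Erlang.
Variables (R : realType) (nu : R).

Definition expSum (n : nat) (t : R) : R :=
  \sum_(0 <= l < n) (2 * nu * t) ^+ l / (l`!)%:R.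

Definition erlang (n : nat) (t : R) : R := 1 - expR (- (2 * nu * t)) * expSum n t.

Lemma expSum_term (n : nat) (t : R) :
  (2 * nu * t) ^+ n / (n`!)%:R = ((2 * nu) ^+ n / (n`!)%:R) * t ^+ n.
Proof. by rewrite exprMn mulrAC. Qed.

Lemma expSum_derive (n : nat) (t : R) :
  is_derive t 1 (expSum n.+1) (2 * nu * expSum n t).
Proof.
elim: n => [|n IH].
  have -> : expSum 1 = fun _ => 1.
    by apply/funext => u; rewrite /expSum big_nat1 expr0 fact0 divr1.
  by apply: is_derive_eq (is_derive_cst _ _ _) _; rewrite /expSum big_nil mulr0.
have -> : expSum n.+2 =
    fun u => expSum n.+1 u + ((2 * nu) ^+ n.+1 / (n.+1`!)%:R) * u ^+ n.+1.
  by apply/funext => u; rewrite /expSum big_nat_recr //= expSum_term.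
apply: is_derive_eq (der_add IH (der_scale _ (der_pow _ _))) _.
rewrite [in RHS]/expSum big_nat_recr //= mulrDr; congr (_ + _).
have fact_neq0 : (n`!)%:R != 0 :> R by rewrite pnatr_eq0 -lt0n fact_gt0.
have Sn_neq0 : (n.+1)%:R != 0 :> R by rewrite pnatr_eq0.
rewrite factS natrM /= expSum_term exprS; field.
by rewrite fact_neq0 addrC natr1 Sn_neq0.
Qed.

Lemma erlang0 (t : R) : erlang 0 t = 1.
Proof. by rewrite /erlang /expSum big_nil mulr0 subr0. Qed.

Lemma erlangS_at0 (n : nat) : erlang n.+1 0 = 0.
Proof.
rewrite /erlang /expSum big_nat_recl // big1 ?addr0.
  by rewrite mulr0 expr0 fact0 divr1 oppr0 expR0 mulr1 subrr.
by move=> i _; rewrite mulr0 expr0n /= mul0r.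
Qed.

Lemma erlang_diff (n : nat) (t : R) :
  erlang n t - erlang n.+1 t = expR (- (2 * nu * t)) * ((2 * nu * t) ^+ n / (n`!)%:R).
Proof. rewrite /erlang [expSum n.+1 t]/expSum big_nat_recr //= -/(expSum n t); ring. Qed.

Lemma erlang_derive (n : nat) (t : R) :
  is_derive t 1 (erlang n.+1) (2 * nu * (erlang n t - erlang n.+1 t)).
Proof.
have -> : erlang n.+1 =
    fun u => 1 + (-1) * (expR (- (2 * nu) * u) * expSum n.+1 u).
  by apply/funext => u; rewrite /erlang mulNr mul1r mulNr.
apply: is_derive_eq
  (der_add (is_derive_cst _ _ _) (der_scale _ (der_mul (der_expR_lin _ _) (expSum_derive _ _)))) _.
rewrite /erlang -(mulNr (2 * nu) t); ring.
Qed.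

Hypothesis nu_ge0 : 0 <= nu.

Lemma erlang_le1 (n : nat) (t : R) : 0 <= t -> erlang n t <= 1.
Proof.
move=> t0; rewrite /erlang lerBlDr lerDl mulr_ge0 ?expR_ge0 //.
by apply: sumr_ge0 => i _; rewrite divr_ge0 ?exprn_ge0 ?mulr_ge0.
Qed.

(* Positivity: G_{n+1} starts at 0 and is nondecreasing on [0, +oo[ because its
   derivative is a nonnegative Poisson weight (mean value theorem). *)
Lemma erlang_ge0 (n : nat) (t : R) : 0 <= t -> 0 <= erlang n t.
Proof.
move=> t_ge0; case: n => [|n]; first by rewrite erlang0.
have [->|t_neq0] := eqVneq t 0; first by rewrite erlangS_at0.
have t_gt0 : 0 < t by rewrite lt0r t_neq0.
have [||c c_in mvt] :=
  @MVT R (erlang n.+1) (fun u => 2 * nu * (erlang n u - erlang n.+1 u)) 0 t t_gt0.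
- by move=> x _; apply: erlang_derive.
- by apply: derivable_within_continuous => x _; have [] := erlang_derive n x.
move: c_in; rewrite in_itv /= => /andP[c_gt0 _].
move/eqP: mvt; rewrite erlangS_at0 subr0 => /eqP ->.
rewrite erlang_diff subr0 !mulr_ge0 ?expR_ge0 ?divr_ge0 ?exprn_ge0 ?ler0n ?mulr_ge0 //.
exact: ltW.
Qed.

End Erlang.

Section LaplaceErlang.
Variables (R : realType) (s nu : R).
Hypotheses (s_gt0 : 0 < s) (nu_gt0 : 0 < nu).

(* A primitive of t |-> e^{-st} G_m(t), built by integrating by parts along
   the recursion G_{m+1}' = 2 nu (G_m - G_{m+1}). *)
Fixpoint erlangPrim (m : nat) (t : R) : R :=
  match m with
  | 0 => - expR (- s * t) / s
  | m'.+1 => (2 * nu * erlangPrim m' t - expR (- s * t) * erlang nu m t) / (s + 2 * nu)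
  end.

Let s2nu_neq0 : s + 2 * nu != 0.
Proof. by rewrite gt_eqF // addr_gt0 // mulr_gt0. Qed.

Lemma erlangPrim_derive (m : nat) (t : R) :
  is_derive t 1 (erlangPrim m) (expR (- s * t) * erlang nu m t).
Proof.
have s_neq0 : s != 0 by rewrite gt_eqF.
elim: m t => [|m IH] t.
  have -> : erlangPrim 0 = fun u => (- s^-1) * expR (- s * u).
    by apply/funext => u /=; rewrite !mulNr mulrC.
  apply: is_derive_eq (der_scale _ (der_expR_lin _ _)) _.
  by rewrite erlang0 mulr1 mulrA mulrNN mulVf // mul1r.
have -> : erlangPrim m.+1 = fun u => (s + 2 * nu)^-1 *
    (2 * nu * erlangPrim m u + (-1) * (expR (- s * u) * erlang nu m.+1 u)).
  by apply/funext => u /=; rewrite mulrC mulN1r.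
apply: is_derive_eq (der_scale _ (der_add (der_scale _ (IH t))
  (der_scale _ (der_mul (der_expR_lin _ _) (erlang_derive _ _ _))))) _.
by field.
Qed.

Lemma erlangPrim_at0 (m : nat) : erlangPrim m 0 = - (2 * nu / (s + 2 * nu)) ^+ m / s.
Proof.
elim: m => [|m IH] /=; first by rewrite mulr0 expR0 expr0.
rewrite IH erlangS_at0 mulr0 subr0 exprS; field.
by rewrite s2nu_neq0 gt_eqF.
Qed.

Lemma erlangPrim_bound (m : nat) :
  exists B : R, forall t, 0 <= t -> `|erlangPrim m t| <= B * expR (- s * t).
Proof.
have s2nu_gt0 : 0 < s + 2 * nu by rewrite addr_gt0 // mulr_gt0.
have two_nu_gt0 : 0 < 2 * nu by rewrite mulr_gt0.
elim: m => [|m [B hB]].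
  exists s^-1 => t t0 /=; rewrite normrM normrN normfV !gtr0_norm ?expR_gt0 //.
  by rewrite mulrC.
exists ((2 * nu * B + 1) / (s + 2 * nu)) => t t0 /=.
rewrite normrM normfV (gtr0_norm s2nu_gt0) ler_pdivrMr //.
have -> : (2 * nu * B + 1) / (s + 2 * nu) * expR (- s * t) * (s + 2 * nu)
    = 2 * nu * (B * expR (- s * t)) + expR (- s * t).
  by field; rewrite s2nu_neq0.
apply: le_trans (ler_normB _ _) _; apply: lerD.
  by rewrite normrM (gtr0_norm two_nu_gt0) ler_pM2l // hB.
rewrite normrM gtr0_norm ?expR_gt0 // (ger0_norm (erlang_ge0 (ltW nu_gt0) _ t0)).
by rewrite ler_piMr ?expR_ge0 // erlang_le1 // ltW.
Qed.

Lemma exp_dominated_cvg0 (f : R -> R) (B : R) :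
  (forall t, 0 <= t -> `|f t| <= B * expR (- s * t)) -> f t @[t --> +oo] --> 0.
Proof.
move=> hB.
have hB1 t : 0 <= t -> `|f t| <= (`|B| + 1) * expR (- s * t).
  move=> t0; apply: le_trans (hB t t0) _; apply: ler_wpM2r; first exact: expR_ge0.
  have := ler_norm B; lra.
have B1_gt0 : 0 < `|B| + 1 by rewrite ltr_wpDl.
apply/cvgrPdist_le => e e0; near=> t.
have t0 : 0 <= t by near: t; apply: nbhs_pinfty_ge; exact: num_real.
have tb : (`|B| + 1) / (e * s) <= t by near: t; apply: nbhs_pinfty_ge; exact: num_real.
rewrite sub0r normrN; apply: le_trans (hB1 t t0) _.
rewrite mulNr expRN -ler_pdivlMl // [_^-1 * e]mulrC -invf_div.
rewrite lef_pV2 ?posrE ?expR_gt0 ?divr_gt0 //.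
apply: le_trans (expR_ge1Dx _).
have -> : (`|B| + 1) / e = s * ((`|B| + 1) / (e * s)) by field; rewrite !gt_eqF.
by rewrite ler_wpDl // ler_pM2l.
Unshelve. all: end_near.
Qed.

(* Laplace transform of K G_{n+1}: the integrand is nonnegative and continuous,
   so integrability and the value both follow from the FTC on [0, +oo[. *)
Lemma laplace_erlang (f : R -> R) (K : R) (n : nat) : 0 <= K ->
  (forall t, f t = K * erlang nu n.+1 t) ->
  (@lebesgue_measure R).-integrable `[0%R, +oo[%classic
     (fun t : R => ((expR (- s * t) * f t)%R)%:E) /\
  (\int[(@lebesgue_measure R)]_(t in `[0%R, +oo[%classic)
     ((expR (- s * t) * f t)%R)%:E)%E = (K * (2 * nu / (s + 2 * nu)) ^+ n.+1 / s)%:E.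
Proof.
move=> K0 hf.
have -> : f = fun t => K * erlang nu n.+1 t by apply/funext.
set g := fun t : R => expR (- s * t) * (K * erlang nu n.+1 t).
set F := fun t : R => K * erlangPrim n.+1 t.
have dF (t : R) : is_derive t 1 F (g t).
  by apply: is_derive_eq (der_scale K (erlangPrim_derive _ t)) _; rewrite /g mulrCA.
have g_ge0 t : 0 <= t -> 0 <= g t.
  by move=> t0; rewrite !mulr_ge0 ?expR_ge0 ?(erlang_ge0 (ltW nu_gt0)).
have g_cont : continuous g.
  move=> x; apply/differentiable_continuous/derivable1_diffP.
  by have [] := der_mul (der_expR_lin (- s) x) (der_scale K (erlang_derive nu n x)).
have F_cvg0 : F t @[t --> +oo] --> 0.
  have [B hB] := erlangPrim_bound n.+1.
  apply: (@exp_dominated_cvg0 _ (K * B)) => t t0.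
  by rewrite /F normrM (ger0_norm K0) -mulrA ler_wpM2l // hB.
have ftc : (\int[(@lebesgue_measure R)]_(t in `[0%R, +oo[%classic) (g t)%:E)%E
    = (0 - F 0)%:E.
  apply: (ge0_continuous_FTC2y g_ge0).
  - exact: continuous_subspaceT.
  - exact: F_cvg0.
  - by move=> x _; have [] := dF x.
  - apply: cvg_at_right_filter; apply: differentiable_continuous.
    by apply/derivable1_diffP; have [] := dF 0.
  - by move=> x _; rewrite derive1E; exact: derive_val.
split.
  apply/integrableP; split.
    apply/measurable_realfun.measurable_EFinP/measurable_funTS.
    exact: measurable_realfun.continuous_measurable_fun.
  have -> : (\int[(@lebesgue_measure R)]_(t in `[0%R, +oo[%classic) `|(g t)%:E|)%E
      = (\int[(@lebesgue_measure R)]_(t in `[0%R, +oo[%classic) (g t)%:E)%E;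
    last by rewrite ftc ltry.
  apply: eq_integral => t; rewrite inE /= in_itv /= andbT => t0.
  by rewrite ger0_norm // g_ge0.
by rewrite ftc /F erlangPrim_at0 sub0r mulNr mulrN opprK mulrA.
Qed.

End LaplaceErlang.

Section BalloonMatrix.
Variables (R : comNzRingType) (d : nat) (bb gamma nu : R).

Definition subdiag (i : nat) : R := if i == d then bb * gamma else gamma.

Lemma AQ_mulmx (M : 'M[R]_d.+1) (i k : 'I_d.+1) :
  (AQ d bb gamma nu *m M) i k = - nu * M i k +
    (if (0 < i)%N then subdiag i * M (inord i.-1) k else 0).
Proof.
rewrite mxE (bigD1 i) //= mxE eqxx; congr (_ + _).
case: i => [[|i] hi] /=.
  by rewrite big1 // => j hj; rewrite mxE /= eq_sym (negbTE hj) mul0r.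
have hi' : (i < d.+1)%N by apply: ltn_trans hi.
rewrite (bigD1 (inord i)) /=; last by apply/eqP => /(congr1 val) /=; rewrite inordK //; lia.
rewrite big1 ?addr0.
  rewrite mxE /= inordK // eqE /= ifN; last by rewrite inordK //; apply/eqP; lia.
  by rewrite eqxx /subdiag.
move=> j /andP [j_neq_i j_neq]; rewrite mxE /= ifN; last by rewrite eq_sym.
rewrite ifN ?mul0r //; apply/negP => /eqP [] hj.
by move: j_neq; rewrite hj; apply/negP; rewrite negbK; apply/eqP/val_inj; rewrite /= inordK.
Qed.

Lemma mulmx_AQtr (M : 'M[R]_d.+1) (i k : 'I_d.+1) :
  (M *m (AQ d bb gamma nu)^T) i k = - nu * M i k +
    (if (0 < k)%N then subdiag k * M i (inord k.-1) else 0).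
Proof.
have -> : M *m (AQ d bb gamma nu)^T = (AQ d bb gamma nu *m M^T)^T.
  by rewrite trmx_mul trmxK.
by rewrite mxE AQ_mulmx !mxE.
Qed.

Lemma BQ_outer (i k : 'I_d.+1) :
  (BQ R d *m (BQ R d)^T) i k = if ((i == 0 :> nat) && (k == 0 :> nat)) then 1 else 0.
Proof.
rewrite mxE big_ord1 !mxE.
by case: (i == 0 :> nat); case: (k == 0 :> nat); rewrite ?mul1r ?mul0r ?mulr0.
Qed.

End BalloonMatrix.

Section Coefficients.
Variables (R : realType) (d : nat) (bb gamma nu : R).

Definition weight (j : nat) : R := if j == d then bb else 1.

Definition coef (j k : nat) : R :=
  weight j * weight k / (2 * nu) * (gamma / (2 * nu)) ^+ (j + k) * ('C(j + k, k))%:R.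

(* Pascal's rule, which is the stationarity of c_{jk} under the Lyapunov
   recursion: a_j c_{j-1,k} + a_k c_{j,k-1} + [j = k = 0] = 2 nu c_{jk}. *)
Lemma coef_rec (j k : nat) : (0 < d)%N -> 0 < nu -> (j <= d)%N -> (k <= d)%N ->
  (if (0 < j)%N then subdiag d bb gamma j * coef j.-1 k else 0) +
  (if (0 < k)%N then subdiag d bb gamma k * coef j k.-1 else 0) +
  (if (j == 0) && (k == 0) then 1 else 0) = 2 * nu * coef j k.
Proof.
move=> d_gt0 nu_gt0 hj hk.
have nu_neq0 : nu != 0 by rewrite gt_eqF.
rewrite /coef /subdiag /weight.
case: j hj => [|j] hj; case: k hk => [|k] hk /=.
- rewrite !add0r (ltn_eqF d_gt0) addn0 bin0 expr0 mulr1 !mul1r; field; by rewrite nu_neq0.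
- have -> : (k == d) = false by apply/eqP; lia.
  rewrite add0n !binn addr0 add0r.
  by case: (k.+1 == d); rewrite exprS; field; rewrite nu_neq0.
- have -> : (j == d) = false by apply/eqP; lia.
  rewrite !addn0 !bin0 !addr0.
  by case: (j.+1 == d); rewrite exprS; field; rewrite nu_neq0.
- have -> : (k == d) = false by apply/eqP; lia.
  have -> : (j == d) = false by apply/eqP; lia.
  rewrite addr0 !addSn !addnS [in RHS]binS natrD !exprS.
  by case: (j.+1 == d); case: (k.+1 == d); field; rewrite nu_neq0.
Qed.

Lemma coef_ge0 (j k : nat) : 0 <= bb -> 0 <= gamma -> 0 < nu -> 0 <= coef j k.
Proof.
move=> bb0 gamma0 nu0.
have weight_ge0 i : 0 <= weight i by rewrite /weight; case: ifP.
have two_nu_ge0 : 0 <= 2 * nu by rewrite mulr_ge0 ?ltW.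
rewrite /coef mulr_ge0 ?ler0n // mulr_ge0 ?exprn_ge0 ?divr_ge0 //.
exact: mulr_ge0.
Qed.

End Coefficients.

Section Gramian.
Variables (R : realType) (d : nat) (bb gamma nu : R) (W : R -> 'M[R]_d.+1).
Hypotheses (d_gt0 : (0 < d)%N) (nu_gt0 : 0 < nu) (W0 : W 0 = 0).
Hypothesis W_ode : forall (t : R) (i k : 'I_d.+1),
  is_derive t 1 (fun u => W u i k)
    ((AQ d bb gamma nu *m W t + W t *m (AQ d bb gamma nu)^T
      + BQ R d *m (BQ R d)^T) i k).

Definition forcing (j k : nat) (t : R) : R :=
  (if (0 < j)%N then subdiag d bb gamma j * W t (inord j.-1) (inord k) else 0) +
  (if (0 < k)%N then subdiag d bb gamma k * W t (inord j) (inord k.-1) else 0) +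
  (if (j == 0) && (k == 0) then 1 else 0).

Lemma entry_ode (j k : nat) (t : R) : (j <= d)%N -> (k <= d)%N ->
  is_derive t 1 (fun u => W u (inord j) (inord k))
    (- (2 * nu) * W t (inord j) (inord k) + forcing j k t).
Proof.
move=> hj hk; apply: is_derive_eq (W_ode t (inord j) (inord k)) _.
have addmxE (X Y Z : 'M[R]_d.+1) (a c : 'I_d.+1) :
  (X + Y + Z) a c = X a c + Y a c + Z a c by rewrite !mxE.
have regroup (w p q e : R) : - nu * w + p + (- nu * w + q) + e = - (2 * nu) * w + (p + q + e).
  by ring.
by rewrite addmxE AQ_mulmx mulmx_AQtr BQ_outer !inordK // regroup.
Qed.

(* If the forcing of W_{jk} is 2 nu c_{jk} G_n, uniqueness for the scalar
   equation y' = -2 nu y gives W_{jk} = c_{jk} G_{n+1}. *)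
Lemma entry_from_forcing (j k n : nat) : (j <= d)%N -> (k <= d)%N ->
  (forall t, forcing j k t = 2 * nu * coef d bb gamma nu j k * erlang nu n t) ->
  forall t, W t (inord j) (inord k) = coef d bb gamma nu j k * erlang nu n.+1 t.
Proof.
move=> hj hk hforce t; set c := coef d bb gamma nu j k.
pose y u := W u (inord j) (inord k) + (- c) * erlang nu n.+1 u.
have y_ode (x : R) : is_derive x 1 y (- (2 * nu) * y x).
  apply: is_derive_eq (der_add (entry_ode x hj hk) (der_scale (- c) (erlang_derive nu n x))) _.
  have regroup (w g g' : R) : - (2 * nu) * w + 2 * nu * c * g + (- c) * (2 * nu * (g - g'))
      = - (2 * nu) * (w + (- c) * g') by ring.
  by rewrite hforce regroup.
have y0 : y 0 = 0 by rewrite /y W0 erlangS_at0 mxE mulr0 addr0.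
by move/eqP: (linear_ode_zero y_ode y0 t); rewrite /y mulNr addr_eq0 opprK => /eqP.
Qed.

Lemma forcing_erlang (j k n : nat) (t : R) :
  (j <= d)%N -> (k <= d)%N -> (j + k)%N = n ->
  (forall j' k', (j' <= d)%N -> (k' <= d)%N -> (j' + k').+1 = n ->
     W t (inord j') (inord k') = coef d bb gamma nu j' k' * erlang nu n t) ->
  forcing j k t = 2 * nu * coef d bb gamma nu j k * erlang nu n t.
Proof.
move=> hj hk <- IH.
rewrite -(coef_rec bb gamma d_gt0 nu_gt0 hj hk) /forcing !mulrDl.
congr (_ + _ + _).
- case: j hj IH => [|j] hj IH /=; first by rewrite mul0r.
  by rewrite (IH j k (ltnW hj) hk (esym (addSn j k))) mulrA.
- case: k hk IH => [|k] hk IH /=; first by rewrite mul0r.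
  by rewrite (IH j k hj (ltnW hk) (esym (addnS j k))) mulrA.
- by case: j k {hj hk IH} => [|j] [|k]; rewrite /= ?mul0r // addn0 erlang0 mulr1.
Qed.

Lemma gramian_entry (n j k : nat) : (j <= d)%N -> (k <= d)%N -> (j + k)%N = n ->
  forall t, W t (inord j) (inord k) = coef d bb gamma nu j k * erlang nu n.+1 t.
Proof.
elim: n j k => [|n IH] j k hj hk hjk; apply: entry_from_forcing => // t.
  by apply: (forcing_erlang hj hk hjk) => j' k' _ _.
apply: (forcing_erlang hj hk hjk) => j' k' hj' hk' [e].
exact: IH.
Qed.

End Gramian.

Lemma laplace_coef (R : realType) (w C gamma s nu : R) (n : nat) : 0 < s -> 0 < nu ->
  w / (2 * nu) * (gamma / (2 * nu)) ^+ n * C * (2 * nu / (s + 2 * nu)) ^+ n.+1 / s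
  = w / (s * (s + 2 * nu)) * (gamma / (s + 2 * nu)) ^+ n * C.
Proof.
move=> s0 nu0.
have s2nu_neq0 : s + 2 * nu != 0 by rewrite gt_eqF // addr_gt0 // mulr_gt0.
have nu_neq0 : nu != 0 by rewrite gt_eqF.
have -> : (gamma / (s + 2 * nu)) ^+ n = (gamma / (2 * nu)) ^+ n * (2 * nu / (s + 2 * nu)) ^+ n.
  by rewrite -exprMn; congr (_ ^+ _); field; rewrite s2nu_neq0 nu_neq0.
rewrite exprS; field; by rewrite s2nu_neq0 nu_neq0 gt_eqF.
Qed.

Theorem mainTheorem3 (R : realType) (d b : nat) (gamma nu : R)
  (W : R -> 'M[R]_d.+1) :
  (2 <= d)%N -> (1 <= b)%N -> 0 < gamma -> 0 < nu ->
  W 0 = 0 ->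
  (forall (t : R) (i k : 'I_d.+1),
     is_derive t 1 (fun u => W u i k)
       ((AQ d b%:R gamma nu *m W t + W t *m (AQ d b%:R gamma nu)^T
         + BQ R d *m (BQ R d)^T) i k)) ->
  (* (i) *)
  (forall (j k : 'I_d.+1), (j < d)%N -> (k < d)%N ->
     (forall s : R, 0 < s ->
        (@lebesgue_measure R).-integrable `[0%R, +oo[%classic
          (fun t : R => ((expR (- s * t) * W t j k)%R)%:E) /\
        ((\int[(@lebesgue_measure R)]_(t in `[0%R, +oo[%classic)
            ((expR (- s * t) * W t j k)%R)%:E)%E
         = (1 / (s * (s + 2 * nu)) * (gamma / (s + 2 * nu)) ^+ (j + k)
            * ('C(j + k, k))%:R)%:E)) /\
     (forall t : R, 0 <= t ->
        W t j k = 1 / (2 * nu) * (gamma / (2 * nu)) ^+ (j + k) * ('C(j + k, k))%:R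
                  * (1 - expR (- (2 * nu * t))
                         * \sum_(0 <= l < (j + k).+1) (2 * nu * t) ^+ l / (l`!)%:R))) /\
  (* (ii) *)
  (forall (j : 'I_d.+1), (j < d)%N ->
     forall s : R, 0 < s ->
       (@lebesgue_measure R).-integrable `[0%R, +oo[%classic
         (fun t : R => ((expR (- s * t) * W t ord_max j)%R)%:E) /\
       (@lebesgue_measure R).-integrable `[0%R, +oo[%classic
         (fun t : R => ((expR (- s * t) * W t j ord_max)%R)%:E) /\
       (\int[(@lebesgue_measure R)]_(t in `[0%R, +oo[%classic) ((expR (- s * t) * W t ord_max j)%R)%:E)%E
         = (b%:R / (s * (s + 2 * nu)) * (gamma / (s + 2 * nu)) ^+ (d + j)
            * ('C(d + j, d))%:R)%:E /\
       (\int[(@lebesgue_measure R)]_(t in `[0%R, +oo[%classic) ((expR (- s * t) * W t j ord_max)%R)%:E)%E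
         = (b%:R / (s * (s + 2 * nu)) * (gamma / (s + 2 * nu)) ^+ (d + j)
            * ('C(d + j, d))%:R)%:E) /\
  (* (iii) *)
  (forall s : R, 0 < s ->
     (@lebesgue_measure R).-integrable `[0%R, +oo[%classic
       (fun t : R => ((expR (- s * t) * W t ord_max ord_max)%R)%:E) /\
     (\int[(@lebesgue_measure R)]_(t in `[0%R, +oo[%classic) ((expR (- s * t) * W t ord_max ord_max)%R)%:E)%E
       = ((b%:R) ^+ 2 / (s * (s + 2 * nu)) * (gamma / (s + 2 * nu)) ^+ (2 * d)
          * ('C(2 * d, d))%:R)%:E).
Proof.
move=> d_ge2 _ gamma_gt0 nu_gt0 W0 W_ode.
have W_entry (j k : 'I_d.+1) t :
    W t j k = coef d b%:R gamma nu j k * erlang nu (j + k).+1 t.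
  rewrite -[in LHS](inord_val j) -[in LHS](inord_val k).
  exact: (gramian_entry (ltnW d_ge2) nu_gt0 W0 W_ode (ltn_ord j) (ltn_ord k) erefl).
have lap (j k : 'I_d.+1) s (s_gt0 : 0 < s) :=
  laplace_erlang s_gt0 nu_gt0 (coef_ge0 _ _ _ (ler0n _ _) (ltW gamma_gt0) nu_gt0) (W_entry j k).
have weight_max : weight d (b%:R : R) d = b%:R by rewrite /weight eqxx.
have weight_lt (j : 'I_d.+1) : (j < d)%N -> weight d (b%:R : R) j = 1.
  by move=> hj; rewrite /weight ifN // neq_ltn hj.
split; [|split].
- move=> j k hj hk; split => [s s_gt0|t _].
    have [? ->] := lap j k s s_gt0; split => //.
    by rewrite /coef !weight_lt // mul1r laplace_coef.
  by rewrite W_entry /coef !weight_lt // mul1r.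
- move=> j hj s s_gt0.
  have [? lap_dj] := lap ord_max j s s_gt0.
  have [? lap_jd] := lap j ord_max s s_gt0.
  do 3 split => //.
    rewrite lap_dj /coef /= weight_max weight_lt // mulr1 laplace_coef //.
    by rewrite -[in RHS](bin_sub (leq_addr j d)) addKn.
  by rewrite lap_jd /coef /= weight_max weight_lt // mul1r laplace_coef // addnC.
- move=> s s_gt0; have [? ->] := lap ord_max ord_max s s_gt0; split => //.
  by rewrite /coef /= weight_max laplace_coef // expr2 addnn -mul2n.
Qed.
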